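(* Let $K\subset\mathbb R$ be compact, let $h:\mathbb R\to\mathbb R$ be a continuous increasing function with $h(0)=0$, and let $\varepsilon>0$. Then there exists a flow map $\varphi$ of the one-dimensional control system $\dot x=\theta_1x^3+\theta_2x^2$ with control $\theta=(\theta_1,\theta_2)\in\mathbb R^2$ (i.e. $\varphi\in\mathcal A_{\mathcal F}(K)$) such that $\|\varphi-h\|_{C(K)}<\varepsilon$.
   Context: Controls are piecewise constant; $\mathcal F=\{x\mapsto\theta_1x^3+\theta_2x^2:\theta\in\mathbb R^2\}$. For $g\in\mathcal F$, $\varphi^g_t$ is the time-$t$ flow of $\dot x=g(x)$. $\mathcal A_{\mathcal F}(K)$ is the set of compositions $\varphi^{f_k}_{t_k}\circ\cdots\circ\varphi^{f_1}_{t_1}$ on $K$ where, with $K_0=K$, each $t_j\ge0$ is smaller than the maximal time for which the flow of $f_j\in\mathcal F$ exists for all initial points in $K_{j-1}$, and $K_j=\varphi^{f_j}_{t_j}(K_{j-1})$. $\|\cdot\|_{C(K)}$ is the supremum norm on $K$. *)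

From Stdlib Require Import Reals.
From Coquelicot Require Import Coquelicot.
Open Scope R_scope.

Definition fam (theta1 theta2 : R) (x : R) : R := theta1 * x ^ 3 + theta2 * x ^ 2.

Definition is_solution (g : R -> R) (x0 T : R) (sol : R -> R) : Prop :=
  sol 0 = x0 /\
  (forall s, 0 <= s <= T -> continuity_pt sol s) /\
  (forall s, 0 < s < T -> is_derive sol s (g (sol s))).

Definition flow_exists_on (g : R -> R) (S : R -> Prop) (T : R) : Prop :=
  forall x, S x -> exists sol, is_solution g x T sol.

Definition admissible_time (g : R -> R) (S : R -> Prop) (t : R) : Prop :=
  0 <= t /\ exists T, t < T /\ flow_exists_on g S T.

Definition is_flow_value (g : R -> R) (x t y : R) : Prop :=
  exists sol, is_solution g x t sol /\ sol t = y.

Inductive in_AF (K : R -> Prop) : (R -> R) -> Prop :=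
| AF_id : in_AF K (fun x => x)
| AF_step (phi psi : R -> R) (theta1 theta2 t : R) :
    in_AF K phi ->
    admissible_time (fam theta1 theta2) (fun y => exists x, K x /\ y = phi x) t ->
    (forall x, K x -> is_flow_value (fam theta1 theta2) (phi x) t (psi x)) ->
    in_AF K psi.

(* In the coordinate u = 1/x the time-one maps of the fields s x^2 and (c/2) x^3 are the
   translation u |-> u - s and u |-> sgn(u) sqrt(u^2 - c).  Every composition of such maps is
   increasing and fixes x = 0.  Conjugating the second map by a translation gives a vortex
   centred at sigma, which moves sigma + d to sigma + 2d when c = 3d^2 and displaces points at
   distance g from sigma by at most |c|/g.  Chaining many small vortices therefore pushes one
   point anywhere on its side of the origin while moving the points beyond it arbitrarily
   little; by induction on the number of points, finitely many points of each sign can be sent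
   as close as we like to any targets ordered in the same way.  Matching h on a fine grid of
   [-M, M] then suffices, because both maps are increasing and agree at 0. *)

From Stdlib Require Import Reals.
From Coquelicot Require Import Coquelicot.
From Stdlib Require Import Lra Psatz List.
Import ListNotations.
Open Scope R_scope.

Lemma continuity_pt_of_ex_derive (f : R -> R) (x : R) :
  ex_derive f x -> continuity_pt f x.
Proof.
  intro H. apply continuity_pt_filterlim. exact (ex_derive_continuous f x H).
Qed.

Lemma continuity_pt_eps_delta (f : R -> R) (x : R) : continuity_pt f x ->
  forall e, 0 < e -> exists d, 0 < d /\ forall y, Rabs (y - x) < d -> Rabs (f y - f x) < e.
Proof.
  intros H e He. destruct (H e He) as [d [Hd Hy]]. exists d. split; [lra|].
  intros y Hyd. destruct (Req_dec y x) as [->|Hne].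
  - rewrite Rminus_diag, Rabs_R0. exact He.
  - apply (Hy y). split; [split; [exact I|auto]|exact Hyd].
Qed.

Lemma exists_nat_div_lt (D B : R) : 0 < B -> exists n : nat, D / INR (S n) < B.
Proof.
  intro HB. destruct (INR_unbounded (D / B)) as [n Hn]. exists n.
  rewrite S_INR. pose proof (pos_INR n).
  apply (Rmult_lt_reg_r (INR n + 1)); [lra|].
  replace (D / (INR n + 1) * (INR n + 1)) with D by (field; lra).
  replace D with (D / B * B) by (field; lra). nra.
Qed.

Lemma linear_path_between (p q : R) (N k : nat) : (0 < N)%nat -> (k <= N)%nat ->
  Rmin p q <= p + INR k * ((q - p) / INR N) <= Rmax p q.
Proof.
  intros HN Hk. assert (HN' : 0 < INR N) by (apply lt_0_INR, HN).
  assert (Ht : 0 <= INR k / INR N <= 1).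
  { split; [apply Rdiv_le_0_compat; [apply pos_INR|exact HN']|].
    apply (Rmult_le_reg_r (INR N)); [exact HN'|]. field_simplify; [apply le_INR, Hk|lra]. }
  replace (p + INR k * ((q - p) / INR N)) with (p + INR k / INR N * (q - p)) by (field; lra).
  unfold Rmin, Rmax. destruct (Rle_dec p q); split; nra.
Qed.

Lemma increasing_range (f : nat -> R) (k : nat) : (forall i, (i < k)%nat -> f i < f (S i)) ->
  forall i, (i <= k)%nat -> f 0%nat <= f i <= f k.
Proof.
  intros Hf i Hi.
  assert (Hle : forall j j', (j <= j' <= k)%nat -> f j <= f j').
  { intros j j' [Hjj' Hj'k]. induction Hjj' as [|j' Hjj' IH]; [lra|].
    apply Rle_trans with (f j'); [apply IH; lia|apply Rlt_le, Hf; lia]. }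
  split; apply Hle; lia.
Qed.

Lemma decreasing_range (f : nat -> R) (k : nat) : (forall i, (i < k)%nat -> f (S i) < f i) ->
  forall i, (i <= k)%nat -> f k <= f i <= f 0%nat.
Proof.
  intros Hf i Hi. destruct (increasing_range (fun j => - f j) k) with (i := i); auto; [|lra].
  intros j Hj. apply Ropp_lt_contravar, Hf, Hj.
Qed.

Lemma Rinv_decreasing (f : nat -> R) (k : nat) : 0 < f 0%nat ->
  (forall i, (i < k)%nat -> f i < f (S i)) -> forall i, (i < k)%nat -> / f (S i) < / f i.
Proof.
  intros H0 Hf i Hi. destruct (increasing_range f k Hf i ltac:(lia)).
  specialize (Hf i Hi). apply Rinv_lt_contravar; nra.
Qed.

Lemma Rinv_increasing_neg (f : nat -> R) (k : nat) : f 0%nat < 0 ->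
  (forall i, (i < k)%nat -> f (S i) < f i) -> forall i, (i < k)%nat -> / f i < / f (S i).
Proof.
  intros H0 Hf i Hi. apply Ropp_lt_cancel. rewrite <- !Rinv_opp.
  apply (Rinv_decreasing (fun j => - f j) k); [lra| |exact Hi].
  intros j Hj. apply Ropp_lt_contravar, Hf, Hj.
Qed.

Lemma Rabs_sub_triang_lt (x y z e1 e2 : R) : Rabs (x - y) <= e1 -> Rabs (y - z) < e2 ->
  Rabs (x - z) < e1 + e2.
Proof.
  intros H1 H2. replace (x - z) with ((x - y) + (y - z)) by ring.
  eapply Rle_lt_trans; [apply Rabs_triang|lra].
Qed.

Lemma sqrt_sq_add_dev (a c : R) : 0 < a -> 0 <= a ^ 2 + c ->
  Rabs (sqrt (a ^ 2 + c) - a) <= Rabs c / a.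
Proof.
  intros Ha Hc. set (s := sqrt (a ^ 2 + c)).
  assert (Hs : 0 <= s) by apply sqrt_pos.
  assert (Hs2 : s * s = a ^ 2 + c) by (apply sqrt_sqrt; exact Hc).
  replace (s - a) with (c / (s + a))
    by (apply (Rmult_eq_reg_r (s + a)); [field_simplify; nra|]; lra).
  unfold Rdiv. rewrite Rabs_mult, (Rabs_pos_eq (/ (s + a))) by (left; apply Rinv_0_lt_compat; lra).
  apply Rmult_le_compat_l; [apply Rabs_pos|]. apply Rinv_le_contravar; lra.
Qed.

Lemma Rinv_close (v t tau eta e : R) : 0 < tau -> tau <= Rabs t -> Rabs (v - t) < eta ->
  eta <= tau / 2 -> eta <= e * tau ^ 2 / 2 -> Rabs (/ v - / t) < e.
Proof.
  intros Htau Ht Hvt H1 H2.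
  assert (Hv : tau / 2 <= Rabs v).
  { pose proof (Rabs_triang_inv t v). rewrite Rabs_minus_sym in Hvt. lra. }
  assert (Hv0 : v <> 0) by (intros ->; rewrite Rabs_R0 in Hv; lra).
  assert (Ht0 : t <> 0) by (intros ->; rewrite Rabs_R0 in Ht; lra).
  replace (/ v - / t) with ((t - v) / (v * t)) by (field; auto).
  unfold Rdiv. rewrite Rabs_mult, Rabs_inv, Rabs_mult, Rabs_minus_sym.
  apply (Rmult_lt_reg_r (Rabs v * Rabs t)); [nra|].
  rewrite Rmult_assoc, Rinv_l, Rmult_1_r by nra.
  assert (e * tau ^ 2 / 2 <= e * (Rabs v * Rabs t)).
  { assert (0 < e * tau ^ 2) by (pose proof (Rabs_pos (v - t)); lra).
    assert (0 < e) by (apply (Rmult_lt_reg_r (tau ^ 2)); nra).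
    assert (tau ^ 2 / 2 <= Rabs v * Rabs t) by (pose proof (Rabs_pos v); nra).
    replace (e * tau ^ 2 / 2) with (e * (tau ^ 2 / 2)) by field.
    apply Rmult_le_compat_l; lra. }
  lra.
Qed.

Lemma uniform_increment (h : R -> R) (M e : R) : continuity h -> 0 < e ->
  exists du, 0 < du /\ forall x y, - M <= x <= y -> y <= M -> y - x < du -> h y - h x < e.
Proof.
  intros Hh He.
  destruct (Heine h (fun x => - M <= x <= M) (compact_P3 (- M) M) (fun x _ => Hh x)
              (mkposreal e He)) as [du Hdu]; simpl in Hdu.
  exists du. split; [apply cond_pos|]. intros x y Hxy Hy Hd.
  assert (Hd' : Rabs (y - x) < du) by (rewrite Rabs_pos_eq; lra).
  specialize (Hdu y x ltac:(lra) ltac:(lra) Hd'). apply Rabs_def2 in Hdu. lra.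
Qed.

Lemma uniform_grid_sandwich (f h : R -> R) (st e : R) (N : nat) :
  (forall x y, 0 <= x <= y -> y <= INR N * st -> f x <= f y) ->
  (forall x y, x <= y -> h x <= h y) ->
  (forall k, (k <= N)%nat -> Rabs (f (INR k * st) - h (INR k * st)) < e) ->
  (forall k, (k < N)%nat -> h (INR (S k) * st) - h (INR k * st) < e) ->
  forall x, 0 <= x <= INR N * st -> Rabs (f x - h x) < 2 * e.
Proof.
  intros Hf Hh; induction N as [|N IH]; intros Hfit Hinc x Hx.
  - specialize (Hfit 0%nat (le_n 0)). simpl in Hfit, Hx. rewrite Rmult_0_l in Hfit.
    replace x with 0 by lra. pose proof (Rabs_pos (f 0 - h 0)). lra.
  - pose proof (pos_INR N). rewrite S_INR in Hx, Hf.
    assert (Hst : 0 <= st) by nra.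
    destruct (Rle_lt_dec x (INR N * st)) as [Hle|Hlt].
    + apply IH; [intros y z Hy Hz; apply Hf; nra|intros k Hk; apply Hfit; lia|
                 intros k Hk; apply Hinc; lia|lra].
    + assert (H1 := Hfit N (Nat.le_succ_diag_r N)). assert (H2 := Hfit (S N) (le_n _)).
      assert (H3 := Hinc N (Nat.lt_succ_diag_r N)). rewrite S_INR in H2, H3.
      assert (f (INR N * st) <= f x <= f ((INR N + 1) * st)) by (split; apply Hf; nra).
      assert (h (INR N * st) <= h x <= h ((INR N + 1) * st)) by (split; apply Hh; lra).
      apply Rabs_def2 in H1. apply Rabs_def2 in H2. apply Rabs_lt_between. lra.
Qed.

Lemma grid_half_fit (f h : R -> R) (M st e : R) (n : nat) :
  0 < st -> INR (S n) * st = M -> f 0 = h 0 ->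
  (forall x y, 0 <= x <= y -> y <= M -> f x <= f y) ->
  (forall x y, x <= y -> h x <= h y) ->
  (forall x y, 0 <= x <= y -> y <= M -> y - x <= st -> h y - h x < e) ->
  (forall i, (i <= n)%nat -> Rabs (f (INR (S i) * st) - h (INR (S i) * st)) < e) ->
  forall x, 0 <= x <= M -> Rabs (f x - h x) < 2 * e.
Proof.
  intros Hst HM Hf0 Hf Hh Hstep Hfit x Hx. rewrite <- HM in Hx, Hf, Hstep.
  assert (Hgrid : forall k, (k <= S n)%nat -> 0 <= INR k * st <= INR (S n) * st).
  { intros k Hk. pose proof (pos_INR k). pose proof (le_INR _ _ Hk). nra. }
  apply (uniform_grid_sandwich f h st e (S n)); auto.
  - intros [|i] Hi; [|apply Hfit; lia].
    simpl. rewrite Rmult_0_l, Hf0, Rminus_diag, Rabs_R0.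
    specialize (Hfit 0%nat (Nat.le_0_l n)).
    pose proof (Rabs_pos (f (INR 1 * st) - h (INR 1 * st))). lra.
  - intros k Hk. pose proof (Hgrid k ltac:(lia)). pose proof (Hgrid (S k) ltac:(lia)).
    apply Hstep; rewrite S_INR in *; lra.
Qed.

Lemma compact_symmetric_bound (K : R -> Prop) : compact K ->
  exists M, 0 < M /\ forall x, K x -> - M <= x <= M.
Proof.
  intro HK. destruct (compact_P1 K HK) as [lo [hi Hb]].
  exists (Rmax 1 (Rmax (Rabs lo) (Rabs hi))). split; [eapply Rlt_le_trans; [|apply Rmax_l]; lra|].
  intros x Kx. destruct (Hb x Kx).
  pose proof (Rmax_r 1 (Rmax (Rabs lo) (Rabs hi))).
  pose proof (Rmax_l (Rabs lo) (Rabs hi)). pose proof (Rmax_r (Rabs lo) (Rabs hi)).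
  pose proof (Rle_abs hi). pose proof (Rle_abs (- lo)). rewrite Rabs_Ropp in *. lra.
Qed.

(** * Time-one maps of the two pure fields *)

Inductive move := Quad (s : R) | Cubic (c : R).

Definition move_theta1 (o : move) : R := match o with Quad _ => 0 | Cubic c => c / 2 end.
Definition move_theta2 (o : move) : R := match o with Quad s => s | Cubic _ => 0 end.

(* The flow of [fam (move_theta1 o) (move_theta2 o)] from [x] exists up to time [t]
   exactly when [t * move_rate o x < 1]. *)
Definition move_rate (o : move) (x : R) : R :=
  match o with Quad s => s * x | Cubic c => c * x ^ 2 end.

Definition move_ok (o : move) (x : R) : Prop := move_rate o x < 1.

Definition move_flow (o : move) (x t : R) : R :=
  match o with
  | Quad s => x / (1 - s * t * x)
  | Cubic c => x / sqrt (1 - c * t * x ^ 2)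
  end.

Definition move_map (o : move) (x : R) : R := move_flow o x 1.

Lemma move_flow_derive (o : move) (x t : R) : t * move_rate o x < 1 ->
  is_derive (move_flow o x) t (fam (move_theta1 o) (move_theta2 o) (move_flow o x t)).
Proof.
  unfold fam; destruct o as [s|c]; simpl; intro H.
  - change (is_derive (fun u => x / (1 - s * u * x)) t
      (0 * (x / (1 - s * t * x)) ^ 3 + s * (x / (1 - s * t * x)) ^ 2)).
    auto_derive; [lra|]. field. lra.
  - change (is_derive (fun u => x / sqrt (1 - c * u * x ^ 2)) t
      (c / 2 * (x / sqrt (1 - c * t * x ^ 2)) ^ 3 + 0 * (x / sqrt (1 - c * t * x ^ 2)) ^ 2)).
    auto_derive; replace (1 + - (c * t * (x * (x * 1)))) with (1 - c * t * x ^ 2) by ring.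
    + split; [lra|]. split; [|exact I]. apply Rgt_not_eq, sqrt_lt_R0. lra.
    + assert (0 < sqrt (1 - c * t * x ^ 2)) by (apply sqrt_lt_R0; lra).
      field. lra.
Qed.

Lemma move_flow_solution (o : move) (x T : R) : 0 <= T -> T * move_rate o x < 1 ->
  is_solution (fam (move_theta1 o) (move_theta2 o)) x T (move_flow o x).
Proof.
  intros HT H.
  assert (Ht : forall t, 0 <= t <= T -> t * move_rate o x < 1).
  { intros t Ht. destruct (Rle_lt_dec (move_rate o x) 0); nra. }
  split; [|split].
  - destruct o; simpl.
    + replace (1 - s * 0 * x) with 1 by ring. field.
    + replace (1 - c * 0 * (x * (x * 1))) with 1 by ring. rewrite sqrt_1. field.
  - intros t Ht'. apply continuity_pt_of_ex_derive. eexists.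
    exact (move_flow_derive o x t (Ht t Ht')).
  - intros t Ht'. apply move_flow_derive, Ht. lra.
Qed.

Lemma move_map_continuous (o : move) (x : R) : move_ok o x -> continuity_pt (move_map o) x.
Proof.
  unfold move_ok, move_map, move_flow; destruct o as [s|c]; simpl; intro H;
    apply continuity_pt_of_ex_derive; auto_derive.
  - lra.
  - split; [lra|]. split; [|exact I]. apply Rgt_not_eq, sqrt_lt_R0. lra.
Qed.

Lemma move_rate_continuous (o : move) (x : R) : continuity_pt (move_rate o) x.
Proof.
  apply continuity_pt_of_ex_derive. destruct o as [s|c]; simpl.
  - change (ex_derive (fun y => s * y) x). auto_derive. exact I.
  - change (ex_derive (fun y => c * y ^ 2) x). auto_derive. exact I.
Qed.

Lemma move_map_0 (o : move) : move_map o 0 = 0.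
Proof. destruct o; unfold move_map, move_flow, Rdiv; ring. Qed.

Lemma move_ok_0 (o : move) : move_ok o 0.
Proof. unfold move_ok; destruct o; simpl; lra. Qed.

Lemma move_rate_between (o : move) (lo x hi : R) : lo <= x <= hi ->
  move_rate o x <= Rmax 0 (Rmax (move_rate o lo) (move_rate o hi)).
Proof.
  intro H. pose proof (Rmax_l 0 (Rmax (move_rate o lo) (move_rate o hi))).
  pose proof (Rmax_r 0 (Rmax (move_rate o lo) (move_rate o hi))).
  pose proof (Rmax_l (move_rate o lo) (move_rate o hi)).
  pose proof (Rmax_r (move_rate o lo) (move_rate o hi)).
  destruct o as [s|c]; simpl in *.
  - destruct (Rle_lt_dec s 0); nra.
  - destruct (Rle_lt_dec c 0); [nra|].
    assert (x ^ 2 <= lo ^ 2 \/ x ^ 2 <= hi ^ 2) as [|] by (destruct (Rle_lt_dec 0 x); nra); nra.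
Qed.

Lemma move_ok_between (o : move) (lo x hi : R) : lo <= x <= hi ->
  move_ok o lo -> move_ok o hi -> move_ok o x.
Proof.
  unfold move_ok; intros H Hlo Hhi. eapply Rle_lt_trans; [exact (move_rate_between o lo x hi H)|].
  apply Rmax_lub_lt; [lra|]. apply Rmax_lub_lt; assumption.
Qed.

Lemma move_map_lt (o : move) (x y : R) : move_ok o x -> move_ok o y -> x < y ->
  move_map o x < move_map o y.
Proof.
  unfold move_ok, move_map, move_flow; destruct o as [s|c]; simpl; intros Hx Hy Hxy.
  - replace (1 - s * 1 * x) with (1 - s * x) by ring.
    replace (1 - s * 1 * y) with (1 - s * y) by ring.
    apply (Rmult_lt_reg_r ((1 - s * x) * (1 - s * y))); [nra|].
    replace (x / (1 - s * x) * ((1 - s * x) * (1 - s * y))) with (x * (1 - s * y)) by (field; lra).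
    replace (y / (1 - s * y) * ((1 - s * x) * (1 - s * y))) with (y * (1 - s * x)) by (field; lra).
    nra.
  - replace (1 - c * 1 * (x * (x * 1))) with (1 - c * x ^ 2) by ring.
    replace (1 - c * 1 * (y * (y * 1))) with (1 - c * y ^ 2) by ring.
    set (A := sqrt (1 - c * x ^ 2)). set (B := sqrt (1 - c * y ^ 2)).
    assert (HA : 0 < A) by (apply sqrt_lt_R0; simpl; lra).
    assert (HB : 0 < B) by (apply sqrt_lt_R0; simpl; lra).
    assert (HA2 : A * A = 1 - c * x ^ 2) by (apply sqrt_sqrt; simpl; lra).
    assert (HB2 : B * B = 1 - c * y ^ 2) by (apply sqrt_sqrt; simpl; lra).
    apply (Rmult_lt_reg_r (A * B)); [nra|].
    replace (x / A * (A * B)) with (x * B) by (field; lra).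
    replace (y / B * (A * B)) with (y * A) by (field; lra).
    assert (E : (x * B) ^ 2 - (y * A) ^ 2 = x ^ 2 - y ^ 2)
      by (replace ((x * B) ^ 2) with (x ^ 2 * (B * B)) by ring;
          replace ((y * A) ^ 2) with (y ^ 2 * (A * A)) by ring; rewrite HA2, HB2; ring).
    assert (Sx : x < 0 -> x * B < 0) by (intro; nra).
    assert (Sy : 0 < y -> 0 < y * A) by (intro; nra).
    assert (Sx' : 0 < x -> 0 < x * B) by (intro; nra).
    assert (Sy' : y <= 0 -> y * A <= 0) by (intro; nra).
    assert (Hsq : x < 0 -> y <= 0 -> y ^ 2 < x ^ 2) by (intros; nra).
    assert (Hsq' : 0 < x -> x ^ 2 < y ^ 2) by (intros; nra).
    revert E Sx Sy Sx' Sy'. generalize (x * B) (y * A). intros P Q E Sx Sy Sx' Sy'.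
    destruct (Rle_lt_dec y 0); destruct (Rlt_le_dec x 0); nra.
Qed.

Fixpoint run (l : list move) (x : R) : R :=
  match l with [] => x | o :: l' => move_map o (run l' x) end.

Fixpoint run_ok (l : list move) (x : R) : Prop :=
  match l with [] => True | o :: l' => run_ok l' x /\ move_ok o (run l' x) end.

Lemma run_app (l1 l2 : list move) (x : R) : run (l1 ++ l2) x = run l1 (run l2 x).
Proof. induction l1 as [|o l1 IH]; simpl; [|rewrite IH]; reflexivity. Qed.

Lemma run_ok_app (l1 l2 : list move) (x : R) :
  run_ok (l1 ++ l2) x <-> run_ok l2 x /\ run_ok l1 (run l2 x).
Proof. induction l1 as [|o l1 IH]; simpl; [tauto|]. rewrite IH, run_app. tauto. Qed.

Lemma run_0 (l : list move) : run l 0 = 0.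
Proof. induction l as [|o l IH]; simpl; [|rewrite IH, move_map_0]; reflexivity. Qed.

Lemma run_ok_0 (l : list move) : run_ok l 0.
Proof. induction l as [|o l IH]; simpl; auto. rewrite run_0. split; [exact IH|apply move_ok_0]. Qed.

Lemma run_lt (l : list move) (x y : R) : run_ok l x -> run_ok l y -> x < y -> run l x < run l y.
Proof.
  induction l as [|o l IH]; simpl; intros Hx Hy Hxy; [exact Hxy|].
  destruct Hx, Hy. apply move_map_lt; auto.
Qed.

Lemma run_le (l : list move) (x y : R) : run_ok l x -> run_ok l y -> x <= y -> run l x <= run l y.
Proof.
  intros Hx Hy [Hxy|<-]; [left; exact (run_lt l x y Hx Hy Hxy)|right; reflexivity].
Qed.

Lemma run_ok_between (l : list move) (lo x hi : R) : lo <= x <= hi ->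
  run_ok l lo -> run_ok l hi -> run_ok l x.
Proof.
  intro Hx; induction l as [|o l IH]; simpl; [tauto|]. intros [Hlo Clo] [Hhi Chi].
  assert (Ho : run_ok l x) by auto.
  split; [exact Ho|]. apply (move_ok_between o (run l lo) _ (run l hi)); auto.
  split; apply run_le; tauto.
Qed.

Lemma run_pos (l : list move) (x : R) : run_ok l x -> 0 < x -> 0 < run l x.
Proof. intros H Hx. rewrite <- (run_0 l). apply run_lt; auto using run_ok_0. Qed.

Lemma run_neg (l : list move) (x : R) : run_ok l x -> x < 0 -> run l x < 0.
Proof. intros H Hx. rewrite <- (run_0 l). apply run_lt; auto using run_ok_0. Qed.

Lemma move_in_AF (K : R -> Prop) (phi : R -> R) (o : move) (lo hi : R) :
  in_AF K phi -> (forall x, K x -> lo <= phi x <= hi) -> move_ok o lo -> move_ok o hi ->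
  in_AF K (fun x => move_map o (phi x)).
Proof.
  intros Hphi Hrange Hlo Hhi.
  set (mu := Rmax 0 (Rmax (move_rate o lo) (move_rate o hi))).
  assert (Hmu0 : 0 <= mu) by apply Rmax_l.
  assert (Hmu1 : mu < 1) by (apply Rmax_lub_lt; [lra|]; apply Rmax_lub_lt; assumption).
  assert (Hrate : forall x, K x -> move_rate o (phi x) <= mu)
    by (intros x Kx; apply move_rate_between, Hrange, Kx).
  apply (AF_step K phi _ (move_theta1 o) (move_theta2 o) 1 Hphi).
  - split; [lra|]. exists (2 / (1 + mu)). split.
    + apply (Rmult_lt_reg_r (1 + mu)); [lra|]. field_simplify; lra.
    + intros y [x [Kx ->]]. exists (move_flow o (phi x)).
      apply move_flow_solution; [apply Rlt_le, Rdiv_lt_0_compat; lra|].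
      apply Rle_lt_trans with (2 / (1 + mu) * mu).
      * apply Rmult_le_compat_l; [apply Rlt_le, Rdiv_lt_0_compat; lra|auto].
      * apply (Rmult_lt_reg_r (1 + mu)); [lra|]. field_simplify; lra.
  - intros x Kx. exists (move_flow o (phi x)). split; [|reflexivity].
    apply move_flow_solution; [lra|]. specialize (Hrate x Kx). lra.
Qed.

Lemma run_in_AF (K : R -> Prop) (l : list move) (lo hi : R) :
  run_ok l lo -> run_ok l hi -> (forall x, K x -> lo <= x <= hi) -> in_AF K (run l).
Proof.
  intros Hlo Hhi HK. induction l as [|o l IH]; [exact (AF_id K)|].
  destruct Hlo as [Hlo Clo], Hhi as [Hhi Chi].
  apply (move_in_AF K (run l) o (run l lo) (run l hi)); auto.
  intros x Kx. assert (Hx : run_ok l x) by (apply (run_ok_between l lo x hi); auto).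
  split; apply run_le; auto; apply HK, Kx.
Qed.

Lemma run_continuous (l : list move) (x : R) : run_ok l x -> continuity_pt (run l) x.
Proof.
  induction l as [|o l IH]; simpl; intro H; [apply continuity_pt_id|].
  destruct H as [H Ho].
  apply (continuity_pt_comp (run l) (move_map o));
    [exact (IH H)|exact (move_map_continuous o _ Ho)].
Qed.

Lemma run_ok_near (l : list move) (x : R) : run_ok l x ->
  exists d, 0 < d /\ forall y, Rabs (y - x) < d -> run_ok l y.
Proof.
  induction l as [|o l IH]; simpl; intro H; [exists 1; split; [lra|auto]|].
  destruct H as [H Ho]. destruct (IH H) as [d1 [Hd1 H1]].
  assert (Hc : continuity_pt (fun y => move_rate o (run l y)) x)
    by exact (continuity_pt_comp (run l) (move_rate o) x (run_continuous l x H)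
                (move_rate_continuous o _)).
  destruct (continuity_pt_eps_delta _ _ Hc (1 - move_rate o (run l x))) as [d2 [Hd2 H2]].
  { unfold move_ok in Ho. lra. }
  exists (Rmin d1 d2). split; [apply Rmin_pos; auto|]. intros y Hy. split.
  - apply H1. eapply Rlt_le_trans; [exact Hy|apply Rmin_l].
  - unfold move_ok in *.
    assert (Hd : Rabs (y - x) < d2) by (eapply Rlt_le_trans; [exact Hy|apply Rmin_r]).
    specialize (H2 y Hd). apply Rabs_def2 in H2. lra.
Qed.

(** * The reciprocal coordinate [u = 1/x] *)

Definition rrun (l : list move) (u : R) : R := / run l (/ u).

Definition rok (l : list move) (u : R) : Prop := run_ok l (/ u).

Lemma rrun_app (l1 l2 : list move) (u : R) : rrun (l1 ++ l2) u = rrun l1 (rrun l2 u).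
Proof. unfold rrun. rewrite run_app, Rinv_inv. reflexivity. Qed.

Lemma rok_app (l1 l2 : list move) (u : R) :
  rok (l1 ++ l2) u <-> rok l2 u /\ rok l1 (rrun l2 u).
Proof. unfold rok, rrun. rewrite run_ok_app, Rinv_inv. tauto. Qed.

Lemma rrun_pos (l : list move) (u : R) : 0 < u -> rok l u -> 0 < rrun l u.
Proof. intros Hu H. apply Rinv_0_lt_compat, run_pos, Rinv_0_lt_compat; assumption. Qed.

Lemma rrun_neg (l : list move) (u : R) : u < 0 -> rok l u -> rrun l u < 0.
Proof. intros Hu H. apply Rinv_lt_0_compat, run_neg, Rinv_lt_0_compat; assumption. Qed.

Lemma rrun_lt_pos (l : list move) (u v : R) : 0 < u < v -> rok l u ->
  rok l v /\ rrun l u < rrun l v.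
Proof.
  unfold rok, rrun; intros Huv H.
  assert (Hinv : 0 < / v < / u) by (split; [apply Rinv_0_lt_compat|apply Rinv_lt_contravar]; nra).
  assert (Hv : run_ok l (/ v))
    by (apply (run_ok_between l 0 _ (/ u)); [lra|apply run_ok_0|exact H]).
  split; [exact Hv|]. apply Rinv_lt_contravar.
  - apply Rmult_lt_0_compat; apply run_pos; (assumption || lra).
  - apply run_lt; (assumption || lra).
Qed.

Lemma rrun_le_pos (l : list move) (u v : R) : 0 < u <= v -> rok l u ->
  rok l v /\ rrun l u <= rrun l v.
Proof.
  intros [Hu [Huv|<-]] H; [|split; [exact H|right; reflexivity]].
  destruct (rrun_lt_pos l u v (conj Hu Huv) H). split; [assumption|left; assumption].
Qed.

Definition mirror_move (o : move) : move :=
  match o with Quad s => Quad (- s) | Cubic c => Cubic c end.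

Definition mirror (l : list move) : list move := map mirror_move l.

Lemma run_mirror (l : list move) (x : R) : run (mirror l) x = - run l (- x).
Proof.
  induction l as [|o l IH]; simpl; [ring|]. rewrite IH.
  destruct o; unfold mirror_move, move_map, move_flow, Rdiv.
  - replace (1 - - s * 1 * - run l (- x)) with (1 - s * 1 * run l (- x)) by ring. ring.
  - replace ((- run l (- x)) ^ 2) with (run l (- x) ^ 2) by ring. ring.
Qed.

Lemma run_ok_mirror (l : list move) (x : R) : run_ok (mirror l) x <-> run_ok l (- x).
Proof.
  induction l as [|o l IH]; simpl; [tauto|].
  rewrite IH, run_mirror. unfold move_ok.
  replace (move_rate (mirror_move o) (- run l (- x))) with (move_rate o (run l (- x)))
    by (destruct o; simpl; ring).
  tauto.
Qed.

Lemma rrun_mirror (l : list move) (u : R) : rrun (mirror l) u = - rrun l (- u).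
Proof. unfold rrun. rewrite run_mirror, <- !Rinv_opp. reflexivity. Qed.

Lemma rok_mirror (l : list move) (u : R) : rok (mirror l) u <-> rok l (- u).
Proof. unfold rok. rewrite run_ok_mirror, Rinv_opp. tauto. Qed.

Lemma rrun_le_neg (l : list move) (u v : R) : v <= u < 0 -> rok l u ->
  rok l v /\ rrun l v <= rrun l u.
Proof.
  intros Huv H.
  assert (Hm : rok (mirror l) (- u)) by (apply rok_mirror; rewrite Ropp_involutive; exact H).
  destruct (rrun_le_pos (mirror l) (- u) (- v) ltac:(lra) Hm) as [Hv Hle].
  rewrite rok_mirror, Ropp_involutive in Hv. rewrite !rrun_mirror, !Ropp_involutive in Hle.
  split; [exact Hv|lra].
Qed.

Lemma rrun_continuous (l : list move) (u : R) : u <> 0 -> rok l u -> continuity_pt (rrun l) u.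
Proof.
  intros Hu H.
  assert (Hinv : forall y, y <> 0 -> continuity_pt Rinv y)
    by (intros y Hy; exact (continuity_pt_inv (fun z => z) y (continuity_pt_id y) Hy)).
  assert (Hx : / u <> 0) by (apply Rinv_neq_0_compat, Hu).
  assert (Hr : run l (/ u) <> 0).
  { destruct (Rlt_or_le 0 (/ u)).
    - apply Rgt_not_eq, run_pos; assumption.
    - apply Rlt_not_eq, run_neg; [assumption|lra]. }
  apply (continuity_pt_comp (fun v => run l (/ v)) Rinv); [|apply Hinv, Hr].
  apply (continuity_pt_comp Rinv (run l)); [apply Hinv, Hu|apply run_continuous, H].
Qed.

Lemma rok_near (l : list move) (u : R) : u <> 0 -> rok l u ->
  exists d, 0 < d /\ forall v, Rabs (v - u) < d -> rok l v.
Proof.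
  intros Hu H. destruct (run_ok_near l (/ u) H) as [d1 [Hd1 H1]].
  destruct (continuity_pt_eps_delta Rinv u
    (continuity_pt_inv (fun z => z) u (continuity_pt_id u) Hu) d1 Hd1) as [d2 [Hd2 H2]].
  exists d2. split; [exact Hd2|]. intros v Hv. apply H1, H2, Hv.
Qed.

Lemma rrun_near (l : list move) (u e : R) : u <> 0 -> rok l u -> 0 < e ->
  exists d, 0 < d /\ forall v, Rabs (v - u) < d -> rok l v /\ Rabs (rrun l v - rrun l u) < e.
Proof.
  intros Hu H He. destruct (rok_near l u Hu H) as [d1 [Hd1 H1]].
  destruct (continuity_pt_eps_delta _ _ (rrun_continuous l u Hu H) e He) as [d2 [Hd2 H2]].
  exists (Rmin d1 d2). split; [apply Rmin_pos; assumption|].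
  intros v Hv. pose proof (Rmin_l d1 d2). pose proof (Rmin_r d1 d2).
  split; [apply H1|apply H2]; lra.
Qed.

Lemma rrun_near_finite (l : list move) (n : nat) (u : nat -> R) (e : R) : 0 < e ->
  (forall i, (i <= n)%nat -> u i <> 0 /\ rok l (u i)) ->
  exists d, 0 < d /\ forall i v, (i <= n)%nat -> Rabs (v - u i) < d ->
    rok l v /\ Rabs (rrun l v - rrun l (u i)) < e.
Proof.
  intros He; induction n as [|n IH]; intro Hu.
  - destruct (Hu 0%nat (le_n 0)) as [H0 R0].
    destruct (rrun_near l _ e H0 R0 He) as [d [Hd H]].
    exists d. split; [exact Hd|]. intros i v Hi. assert (i = 0%nat) by lia. subst. apply H.
  - destruct IH as [d0 [Hd0 H0]]; [intros i Hi; apply Hu; lia|].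
    destruct (Hu (S n) (le_n _)) as [HS RS].
    destruct (rrun_near l _ e HS RS He) as [d1 [Hd1 H1]].
    exists (Rmin d0 d1). split; [apply Rmin_pos; assumption|].
    intros i v Hi Hv. pose proof (Rmin_l d0 d1). pose proof (Rmin_r d0 d1).
    destruct (Nat.eq_dec i (S n)) as [->|Hne]; [apply H1; lra|apply H0; [lia|lra]].
Qed.

Lemma rrun_quad (s u : R) : 0 < u * (u - s) -> rok [Quad s] u /\ rrun [Quad s] u = u - s.
Proof.
  intro H. assert (Hu : u <> 0) by (intros ->; lra).
  assert (Hus : u - s <> 0) by (intro E; rewrite E in H; lra).
  unfold rok, rrun, move_map, move_flow; simpl. split.
  - split; [exact I|]. unfold move_ok; simpl.
    replace (s * / u) with (1 - u * (u - s) / (u * u)) by (field; exact Hu).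
    assert (0 < u * (u - s) / (u * u)) by (apply Rdiv_lt_0_compat; nra). lra.
  - field. split; [exact Hu|]. replace (u - s * 1) with (u - s) by ring. exact Hus.
Qed.

Lemma rrun_cubic_pos (c u : R) : 0 < u -> c < u ^ 2 ->
  rok [Cubic c] u /\ rrun [Cubic c] u = sqrt (u ^ 2 - c).
Proof.
  intros Hu Hc. unfold rok, rrun; cbn [run run_ok]. unfold move_ok, move_map, move_flow, move_rate.
  assert (E : 1 - c * 1 * (/ u) ^ 2 = (u ^ 2 - c) / u ^ 2) by (field; lra).
  assert (Hq : 0 < (u ^ 2 - c) / u ^ 2) by (apply Rdiv_lt_0_compat; nra).
  split.
  - split; [exact I|]. lra.
  - rewrite E. replace (u ^ 2 - c) with (u ^ 2 * ((u ^ 2 - c) / u ^ 2)) at 2 by (field; lra).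
    rewrite sqrt_mult_alt, sqrt_pow2 by nra.
    assert (0 < sqrt ((u ^ 2 - c) / u ^ 2)) by (apply sqrt_lt_R0; exact Hq).
    field. lra.
Qed.

Lemma rrun_cubic_neg (c u : R) : u < 0 -> c < u ^ 2 ->
  rok [Cubic c] u /\ rrun [Cubic c] u = - sqrt (u ^ 2 - c).
Proof.
  intros Hu Hc. destruct (rrun_cubic_pos c (- u)) as [Hok E]; [lra|nra|].
  replace ((- u) ^ 2) with (u ^ 2) in E by ring.
  change [Cubic c] with (mirror [Cubic c]).
  rewrite rok_mirror, rrun_mirror, E. split; [exact Hok|reflexivity].
Qed.

(** * Vortices *)

(* In the coordinate [u = 1/x] a vortex centred at [sigma] acts as
   [u |-> sigma + sgn (u - sigma) sqrt ((u - sigma)^2 + c)]. *)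
Definition vortex (sigma c : R) : list move := [Quad (- sigma); Cubic (- c); Quad sigma].

Lemma vortex_pos (sigma c y : R) : 0 < sigma < y -> 0 < (y - sigma) ^ 2 + c ->
  rok (vortex sigma c) y /\ rrun (vortex sigma c) y = sigma + sqrt ((y - sigma) ^ 2 + c).
Proof.
  intros Hy Hc. change (vortex sigma c) with ([Quad (- sigma)] ++ [Cubic (- c)] ++ [Quad sigma]).
  rewrite !rok_app, !rrun_app.
  destruct (rrun_quad sigma y) as [H1 ->]; [nra|].
  destruct (rrun_cubic_pos (- c) (y - sigma)) as [H2 ->]; [lra|lra|].
  replace ((y - sigma) ^ 2 - - c) with ((y - sigma) ^ 2 + c) by ring.
  assert (Hw : 0 < sqrt ((y - sigma) ^ 2 + c)) by (apply sqrt_lt_R0; exact Hc).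
  destruct (rrun_quad (- sigma) (sqrt ((y - sigma) ^ 2 + c))) as [H3 ->]; [nra|].
  split; [tauto|ring].
Qed.

Lemma vortex_neg (sigma c y : R) : 0 < sigma -> y < 0 -> sigma ^ 2 < (y - sigma) ^ 2 + c ->
  rok (vortex sigma c) y /\ rrun (vortex sigma c) y = sigma - sqrt ((y - sigma) ^ 2 + c).
Proof.
  intros Hs Hy Hc. change (vortex sigma c) with ([Quad (- sigma)] ++ [Cubic (- c)] ++ [Quad sigma]).
  rewrite !rok_app, !rrun_app.
  destruct (rrun_quad sigma y) as [H1 ->]; [nra|].
  destruct (rrun_cubic_neg (- c) (y - sigma)) as [H2 ->]; [lra|nra|].
  replace ((y - sigma) ^ 2 - - c) with ((y - sigma) ^ 2 + c) by ring.
  set (w := sqrt ((y - sigma) ^ 2 + c)).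
  assert (Hw : sigma < w).
  { assert (Hw2 : w * w = (y - sigma) ^ 2 + c) by (apply sqrt_sqrt; nra).
    assert (0 <= w) by apply sqrt_pos. nra. }
  destruct (rrun_quad (- sigma) (- w)) as [H3 ->]; [nra|].
  split; [tauto|ring].
Qed.

Definition step_vortex (p q d : R) : list move :=
  let sigma := Rmin p q - d in vortex sigma ((q - sigma) ^ 2 - (p - sigma) ^ 2).

Lemma step_vortex_hits (p q d : R) : 0 < d < Rmin p q ->
  rok (step_vortex p q d) p /\ rrun (step_vortex p q d) p = q.
Proof.
  intro Hd. unfold step_vortex. set (sigma := Rmin p q - d).
  assert (Hp : sigma < p) by (pose proof (Rmin_l p q); unfold sigma; lra).
  assert (Hq : sigma < q) by (pose proof (Rmin_r p q); unfold sigma; lra).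
  assert (Hs : 0 < sigma) by (unfold sigma; lra).
  assert (E : (p - sigma) ^ 2 + ((q - sigma) ^ 2 - (p - sigma) ^ 2) = (q - sigma) ^ 2) by ring.
  destruct (vortex_pos sigma ((q - sigma) ^ 2 - (p - sigma) ^ 2) p) as [Hok ->];
    [lra|rewrite E; nra|].
  rewrite E, sqrt_pow2 by lra. split; [exact Hok|ring].
Qed.

Lemma step_vortex_far (p q d g y : R) : 0 < d < Rmin p q -> Rabs (q - p) <= d -> 2 * d <= g ->
  Rmax p q + g <= y \/ y <= - g ->
  rok (step_vortex p q d) y /\ Rabs (rrun (step_vortex p q d) y - y) <= 3 * d ^ 2 / g.
Proof.
  intros Hd Hpq Hg Hy. unfold step_vortex. set (sigma := Rmin p q - d).
  set (c := (q - sigma) ^ 2 - (p - sigma) ^ 2).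
  assert (Hsigma : 0 < sigma) by (unfold sigma; lra).
  assert (Hmax : d <= Rmax p q - sigma <= 2 * d).
  { apply Rabs_le_between in Hpq. unfold sigma, Rmin, Rmax.
    destruct (Rle_dec p q); lra. }
  assert (Hc : Rabs c <= 3 * d ^ 2).
  { assert (Hsum : 0 <= (q - sigma) + (p - sigma) <= 3 * d).
    { apply Rabs_le_between in Hpq. unfold sigma, Rmin. destruct (Rle_dec p q); lra. }
    unfold c. replace ((q - sigma) ^ 2 - (p - sigma) ^ 2)
      with ((q - p) * ((q - sigma) + (p - sigma))) by ring.
    rewrite Rabs_mult, (Rabs_pos_eq ((q - sigma) + (p - sigma))) by lra.
    pose proof (Rabs_pos (q - p)). nra. }
  apply Rabs_le_between in Hc as Hc'.
  assert (Hg0 : 0 < g) by lra.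
  destruct Hy as [Hy|Hy].
  - assert (Ha : g + d <= y - sigma) by lra.
    destruct (vortex_pos sigma c y) as [Hok ->]; [lra|nra|].
    split; [exact Hok|].
    replace (sigma + sqrt ((y - sigma) ^ 2 + c) - y)
      with (sqrt ((y - sigma) ^ 2 + c) - (y - sigma)) by ring.
    eapply Rle_trans; [apply sqrt_sq_add_dev; nra|].
    apply Rmult_le_compat; [apply Rabs_pos|left; apply Rinv_0_lt_compat; lra|exact Hc|].
    apply Rinv_le_contravar; lra.
  - assert (Ha : g <= sigma - y) by lra.
    destruct (vortex_neg sigma c y) as [Hok ->]; [lra|lra|nra|].
    split; [exact Hok|].
    replace ((y - sigma) ^ 2) with ((sigma - y) ^ 2) by ring.
    replace (sigma - sqrt ((sigma - y) ^ 2 + c) - y)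
      with (- (sqrt ((sigma - y) ^ 2 + c) - (sigma - y))) by ring.
    rewrite Rabs_Ropp. eapply Rle_trans; [apply sqrt_sq_add_dev; nra|].
    apply Rmult_le_compat; [apply Rabs_pos|left; apply Rinv_0_lt_compat; lra|exact Hc|].
    apply Rinv_le_contravar; lra.
Qed.

Lemma vortex_chain (p : nat -> R) (d Q r : R) (N : nat) :
  0 < d -> 4 * d <= r -> INR N * (6 * d ^ 2 / r) <= r / 2 ->
  (forall k, (k <= N)%nat -> d < p k <= Q) ->
  (forall k, (k < N)%nat -> Rabs (p (S k) - p k) <= d) ->
  exists l, rok l (p 0%nat) /\ rrun l (p 0%nat) = p N /\
    forall y, Q + r <= y \/ y <= - r ->
      rok l y /\ Rabs (rrun l y - y) <= INR N * (6 * d ^ 2 / r).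
Proof.
  (* Far points drift by at most [r/2] in total, so each vortex meets them at distance
     [r/2] from its centre and moves them by at most [3 d^2 / (r/2)]. *)
  intros Hd Hr. set (X := 6 * d ^ 2 / r).
  assert (HX : 0 <= X) by (unfold X; apply Rmult_le_pos; [nra|left; apply Rinv_0_lt_compat; lra]).
  induction N as [|N IH]; intros Hbudget Hp Hstep.
  - exists []. unfold rok, rrun; cbn [run run_ok]. rewrite Rinv_inv.
    split; [exact I|split; [reflexivity|]]. intros y _. split; [exact I|].
    rewrite Rinv_inv, Rminus_diag, Rabs_R0. simpl. lra.
  - rewrite S_INR in Hbudget.
    destruct IH as (l & Hok & Hhit & Hfar);
      [nra|intros k Hk; apply Hp; lia|intros k Hk; apply Hstep; lia|].
    destruct (Hp N (Nat.le_succ_diag_r N)) as [HpN HpNQ].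
    destruct (Hp (S N) (le_n _)) as [HpSN HpSNQ].
    assert (Hmin : 0 < d < Rmin (p N) (p (S N))) by (split; [lra|apply Rmin_glb_lt; lra]).
    destruct (step_vortex_hits (p N) (p (S N)) d Hmin) as [Hok' Hhit'].
    exists (step_vortex (p N) (p (S N)) d ++ l). rewrite rok_app, rrun_app, Hhit.
    split; [tauto|split; [exact Hhit'|]].
    intros y Hy. destruct (Hfar y Hy) as [Hyok Hydev].
    set (z := rrun l y) in *.
    assert (Hz : Rmax (p N) (p (S N)) + r / 2 <= z \/ z <= - (r / 2)).
    { apply Rabs_le_between in Hydev. pose proof (Rmax_lub _ _ _ HpNQ HpSNQ).
      destruct Hy; [left|right]; nra. }
    destruct (step_vortex_far (p N) (p (S N)) d (r / 2) z Hmin (Hstep N (Nat.lt_succ_diag_r N))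
                ltac:(lra) Hz) as [Hzok Hzdev].
    rewrite rok_app, rrun_app. split; [tauto|]. fold z.
    replace (3 * d ^ 2 / (r / 2)) with X in Hzdev by (unfold X; field; lra).
    replace (rrun (step_vortex (p N) (p (S N)) d) z - y)
      with ((rrun (step_vortex (p N) (p (S N)) d) z - z) + (z - y)) by ring.
    rewrite S_INR. eapply Rle_trans; [apply Rabs_triang|]. lra.
Qed.

Lemma push (p q r rho : R) : 0 < p -> 0 < q -> 0 < r -> 0 < rho ->
  exists l, rok l p /\ rrun l p = q /\
    forall y, Rmax p q + r <= y \/ y <= - r -> rok l y /\ Rabs (rrun l y - y) <= rho.
Proof.
  intros Hp Hq Hr Hrho.
  (* [D] bounds [|q - p|] and stays positive when [p = q] *)
  set (D := Rabs (q - p) + 1).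
  assert (HD : 0 < D) by (pose proof (Rabs_pos (q - p)); unfold D; lra).
  set (B := Rmin (Rmin (Rmin p q / 2) (r / 4)) (Rmin (r ^ 2 / (12 * D)) (rho * r / (6 * D)))).
  assert (HB : 0 < B).
  { unfold B. repeat apply Rmin_pos; try apply Rdiv_lt_0_compat; try apply Rmin_pos; nra. }
  assert (HB1 : B <= Rmin p q / 2) by (unfold B; eapply Rle_trans; apply Rmin_l).
  assert (HB2 : B <= r / 4) by (unfold B; eapply Rle_trans; [apply Rmin_l|apply Rmin_r]).
  assert (HB3 : B <= r ^ 2 / (12 * D)) by (unfold B; eapply Rle_trans; [apply Rmin_r|apply Rmin_l]).
  assert (HB4 : B <= rho * r / (6 * D)) by (unfold B; eapply Rle_trans; apply Rmin_r).
  destruct (exists_nat_div_lt D B HB) as [n Hn].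
  set (N := S n) in *. set (d := D / INR N) in *.
  assert (HN : 0 < INR N) by (apply lt_0_INR; unfold N; lia).
  assert (Hd : 0 < d) by (apply Rdiv_lt_0_compat; assumption).
  assert (Htotal : INR N * (6 * d ^ 2 / r) = 6 * D / r * d) by (unfold d; field; lra).
  assert (H6 : 0 < 6 * D / r) by (apply Rdiv_lt_0_compat; lra).
  assert (Hbudget1 : 6 * D / r * d <= r / 2).
  { replace (r / 2) with (6 * D / r * (r ^ 2 / (12 * D))) by (field; lra).
    apply Rmult_le_compat_l; lra. }
  assert (Hbudget2 : 6 * D / r * d <= rho).
  { replace rho with (6 * D / r * (rho * r / (6 * D))) by (field; lra).
    apply Rmult_le_compat_l; lra. }
  set (pk := fun k => p + INR k * ((q - p) / INR N)).
  destruct (vortex_chain pk d (Rmax p q) r N Hd) as (l & Hok & Hhit & Hfar); [lra|lra| | |].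
  - intros k Hk. destruct (linear_path_between p q N k ltac:(unfold N; lia) Hk). unfold pk. lra.
  - intros k Hk. unfold pk. rewrite S_INR.
    replace (p + (INR k + 1) * ((q - p) / INR N) - (p + INR k * ((q - p) / INR N)))
      with ((q - p) / INR N) by ring.
    unfold Rdiv. rewrite Rabs_mult, (Rabs_pos_eq (/ INR N)) by (left; apply Rinv_0_lt_compat, HN).
    apply Rmult_le_compat_r; [left; apply Rinv_0_lt_compat, HN|]. unfold D. lra.
  - assert (E0 : pk 0%nat = p) by (unfold pk; simpl; ring).
    assert (EN : pk N = q) by (unfold pk; field; lra).
    exists l. rewrite E0 in Hok, Hhit. rewrite EN in Hhit.
    split; [exact Hok|split; [exact Hhit|]]. intros y Hy. destruct (Hfar y Hy) as [Hyok Hydev].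
    split; [exact Hyok|lra].
Qed.

Lemma push_neg (p q r rho : R) : p < 0 -> q < 0 -> 0 < r -> 0 < rho ->
  exists l, rok l p /\ rrun l p = q /\
    forall y, y <= Rmin p q - r \/ r <= y -> rok l y /\ Rabs (rrun l y - y) <= rho.
Proof.
  intros Hp Hq Hr Hrho.
  destruct (push (- p) (- q) r rho) as (l & Hok & Hhit & Hfar); try lra.
  exists (mirror l). rewrite rok_mirror, rrun_mirror, Hhit.
  split; [exact Hok|split; [ring|]]. intros y Hy.
  destruct (Hfar (- y)) as [Hyok Hydev].
  { rewrite <- Ropp_involutive with (r := Rmax (- p) (- q)), Ropp_Rmax, !Ropp_involutive. lra. }
  rewrite rok_mirror, rrun_mirror. split; [exact Hyok|].
  replace (- rrun l (- y) - y) with (- (rrun l (- y) - - y)) by ring.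
  rewrite Rabs_Ropp. exact Hydev.
Qed.

(** * Interpolation of finitely many points *)

(* Both families are indexed by increasing distance [|x| = 1/|u|] from the origin. *)
Definition interpolable (n m : nat) : Prop :=
  forall (b tb a ta : nat -> R) (eta : R),
  0 < b n -> (forall i, (i < n)%nat -> b (S i) < b i) ->
  0 < tb n -> (forall i, (i < n)%nat -> tb (S i) < tb i) ->
  a m < 0 -> (forall j, (j < m)%nat -> a j < a (S j)) ->
  ta m < 0 -> (forall j, (j < m)%nat -> ta j < ta (S j)) ->
  0 < eta ->
  exists l, rok l (b n) /\ rok l (a m) /\
    (forall i, (i <= n)%nat -> Rabs (rrun l (b i) - tb i) < eta) /\
    (forall j, (j <= m)%nat -> Rabs (rrun l (a j) - ta j) < eta).

Lemma interpolable_base : interpolable 0 0.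
Proof.
  intros b tb a ta eta Hb _ Htb _ Ha _ Hta _ Heta.
  destruct (push (b 0%nat) (tb 0%nat) (- a 0%nat) (eta / 2)) as (F1 & Hok1 & Hhit1 & Hfar1);
    try lra.
  destruct (Hfar1 (a 0%nat)) as [Haok _]; [lra|].
  set (y := rrun F1 (a 0%nat)).
  assert (Hy : y < 0) by (apply rrun_neg; assumption).
  destruct (push_neg y (ta 0%nat) (tb 0%nat) (eta / 2)) as (F2 & Hok2 & Hhit2 & Hfar2); try lra.
  destruct (Hfar2 (tb 0%nat)) as [Htbok Htbdev]; [lra|].
  exists (F2 ++ F1). rewrite !rok_app, Hhit1. split; [tauto|split; [tauto|split]].
  - intros i Hi. replace i with 0%nat by lia. rewrite rrun_app, Hhit1. lra.
  - intros j Hj. replace j with 0%nat by lia.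
    rewrite rrun_app. fold y. rewrite Hhit2, Rminus_diag, Rabs_R0. exact Heta.
Qed.

Lemma interpolable_sym (n m : nat) : interpolable m n -> interpolable n m.
Proof.
  intros H b tb a ta eta Hb Hbd Htb Htbd Ha Had Hta Htad Heta.
  destruct (H (fun j => - a j) (fun j => - ta j) (fun i => - b i) (fun i => - tb i) eta)
    as (l & Hok1 & Hok2 & Hfit1 & Hfit2); cbv beta; try lra;
    try (intros k Hk; (apply Ropp_lt_contravar; auto)).
  exists (mirror l). rewrite !rok_mirror. split; [exact Hok2|split; [exact Hok1|split]].
  - intros i Hi. rewrite rrun_mirror.
    replace (- rrun l (- b i) - tb i) with (- (rrun l (- b i) - - tb i)) by ring.
    rewrite Rabs_Ropp. apply Hfit2, Hi.
  - intros j Hj. rewrite rrun_mirror.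
    replace (- rrun l (- a j) - ta j) with (- (rrun l (- a j) - - ta j)) by ring.
    rewrite Rabs_Ropp. apply Hfit1, Hj.
Qed.

Section InterpolationStep.

Variables (n m : nat) (b tb a ta : nat -> R).
Hypothesis b_pos : 0 < b (S n).
Hypothesis b_decr : forall i, (i < S n)%nat -> b (S i) < b i.
Hypothesis a_neg : a m < 0.
Hypothesis a_incr : forall j, (j < m)%nat -> a j < a (S j).

Lemma b_ge_inner (i : nat) : (i <= n)%nat -> 0 < b n <= b i.
Proof.
  intro Hi. assert (b (S n) < b n) by (apply b_decr; lia).
  destruct (decreasing_range b n) with (i := i); [intros k Hk; apply b_decr; lia|exact Hi|lra].
Qed.

Lemma a_le_last (j : nat) : (j <= m)%nat -> a j <= a m.
Proof. intro Hj. apply (increasing_range a m a_incr j Hj). Qed.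

Lemma near_inner_points (l : list move) (e : R) : 0 < e -> rok l (b n) -> rok l (a m) ->
  exists r, 0 < r /\
    (forall i v, (i <= n)%nat -> Rabs (v - b i) < r ->
       rok l v /\ Rabs (rrun l v - rrun l (b i)) < e) /\
    (forall j v, (j <= m)%nat -> Rabs (v - a j) < r ->
       rok l v /\ Rabs (rrun l v - rrun l (a j)) < e).
Proof.
  intros He Hokb Hoka.
  destruct (rrun_near_finite l n b e He) as [r1 [Hr1 Hnearb]].
  { intros i Hi. destruct (b_ge_inner i Hi). split; [lra|].
    exact (proj1 (rrun_le_pos l (b n) (b i) (b_ge_inner i Hi) Hokb)). }
  destruct (rrun_near_finite l m a e He) as [r2 [Hr2 Hneara]].
  { intros j Hj. pose proof (a_le_last j Hj). split; [lra|].
    exact (proj1 (rrun_le_neg l (a m) (a j) (conj (a_le_last j Hj) a_neg) Hoka)). }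
  exists (Rmin r1 r2). pose proof (Rmin_l r1 r2). pose proof (Rmin_r r1 r2).
  split; [apply Rmin_pos; assumption|split].
  - intros i v Hi Hv. apply Hnearb; [exact Hi|lra].
  - intros j v Hj Hv. apply Hneara; [exact Hj|lra].
Qed.

Lemma approach_inner_points (e : R) : interpolable n m -> 0 < e ->
  0 < tb n -> (forall i, (i < n)%nat -> tb (S i) < tb i) ->
  ta m < 0 -> (forall j, (j < m)%nat -> ta j < ta (S j)) ->
  exists L, rok L (b (S n)) /\ rok L (a m) /\
    (forall i, (i <= n)%nat -> Rabs (rrun L (b i) - tb i) < e) /\
    (forall j, (j <= m)%nat -> Rabs (rrun L (a j) - ta j) < e).
Proof.
  intros IH He Htb Htbd Hta Htad.
  destruct (b_ge_inner n (le_n n)) as [Hbn _].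
  destruct (IH b tb a ta (e / 2)) as (l1 & Hokb & Hoka & Hfitb & Hfita); auto; [lra|].
  destruct (near_inner_points l1 (e / 2)) as (r0 & Hr0 & Hnearb & Hneara); [lra|auto..].
  (* first bring the new point into the neighbourhood of [b n] where [l1] is defined *)
  set (q := Rmax (b (S n)) (b n - r0 / 2)).
  assert (Hq0 : b (S n) <= q) by apply Rmax_l.
  assert (Hq1 : b n - r0 / 2 <= q) by apply Rmax_r.
  assert (Hbnq : b (S n) < b n) by (apply b_decr; lia).
  assert (Hq : q < b n) by (apply Rmax_lub_lt; lra).
  set (r := Rmin (b n - q) (- a m)).
  assert (Hr : 0 < r) by (apply Rmin_pos; lra).
  assert (Hrb : r <= b n - q) by apply Rmin_l.
  assert (Hra : r <= - a m) by apply Rmin_r.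
  destruct (push (b (S n)) q r (r0 / 2)) as (P & HokP & HhitP & HfarP); try lra.
  rewrite (Rmax_right (b (S n)) q) in HfarP by lra.
  assert (Hclose : forall y u t, Rabs (y - rrun l1 u) < e / 2 -> Rabs (rrun l1 u - t) < e / 2 ->
                     Rabs (y - t) < e)
    by (intros y u t H1 H2; pose proof (Rabs_sub_triang_lt y _ t _ _ (Rlt_le _ _ H1) H2); lra).
  exists (l1 ++ P). rewrite !rok_app. split; [|split; [|split]].
  - split; [exact HokP|]. rewrite HhitP. apply (Hnearb n q (le_n n)).
    rewrite Rabs_minus_sym, Rabs_pos_eq; lra.
  - destruct (HfarP (a m)) as [Hok Hdev]; [right; lra|].
    split; [exact Hok|]. apply (Hneara m _ (le_n m)). lra.
  - intros i Hi. destruct (b_ge_inner i Hi).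
    destruct (HfarP (b i)) as [_ Hdev]; [left; lra|].
    rewrite rrun_app. apply (Hclose _ (b i)); [apply Hnearb; [exact Hi|lra]|apply Hfitb, Hi].
  - intros j Hj. pose proof (a_le_last j Hj).
    destruct (HfarP (a j)) as [_ Hdev]; [right; lra|].
    rewrite rrun_app. apply (Hclose _ (a j)); [apply Hneara; [exact Hj|lra]|apply Hfita, Hj].
Qed.

Lemma place_outer_point (L : list move) (e eta : R) : 0 < e -> 2 * e <= eta ->
  0 < tb (S n) -> 2 * e <= tb n - tb (S n) ->
  rok L (b (S n)) -> rok L (a m) ->
  (forall i, (i <= n)%nat -> Rabs (rrun L (b i) - tb i) < e) ->
  (forall j, (j <= m)%nat -> Rabs (rrun L (a j) - ta j) < e) ->
  exists l, rok l (b (S n)) /\ rok l (a m) /\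
    (forall i, (i <= S n)%nat -> Rabs (rrun l (b i) - tb i) < eta) /\
    (forall j, (j <= m)%nat -> Rabs (rrun l (a j) - ta j) < eta).
Proof.
  intros He Heta Htb Hgap Hokb Hoka Hfitb Hfita.
  assert (Hbnq : 0 < b (S n) < b n) by (split; [|apply b_decr]; lia || lra).
  destruct (rrun_lt_pos L (b (S n)) (b n) Hbnq Hokb) as [Hokn Hlt].
  set (y0 := rrun L (b (S n))) in *. set (y1 := rrun L (b n)) in *.
  assert (Hy0 : 0 < y0) by (apply rrun_pos; [lra|exact Hokb]).
  assert (Hy1 : tb (S n) < y1)
    by (pose proof (Hfitb n (le_n n)) as H; apply Rabs_def2 in H; fold y1 in H; lra).
  set (w := rrun L (a m)).
  assert (Hw : w < 0) by (apply rrun_neg; assumption).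
  assert (Hmax : Rmax y0 (tb (S n)) < y1) by (apply Rmax_lub_lt; lra).
  set (r := Rmin (y1 - Rmax y0 (tb (S n))) (- w)).
  assert (Hr : 0 < r) by (apply Rmin_pos; lra).
  assert (Hry : r <= y1 - Rmax y0 (tb (S n))) by apply Rmin_l.
  assert (Hrw : r <= - w) by apply Rmin_r.
  destruct (push y0 (tb (S n)) r e) as (F & HokF & HhitF & HfarF); try lra.
  assert (Hclose : forall z t, Rabs (rrun F z - z) <= e -> Rabs (z - t) < e ->
                     Rabs (rrun F z - t) < eta)
    by (intros z t H1 H2; pose proof (Rabs_sub_triang_lt _ z t _ _ H1 H2); lra).
  exists (F ++ L). rewrite !rok_app. split; [tauto|split; [|split]].
  - split; [exact Hoka|]. apply HfarF. right. fold w. lra.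
  - intros i Hi. rewrite rrun_app. destruct (Nat.eq_dec i (S n)) as [->|Hne].
    + fold y0. rewrite HhitF, Rminus_diag, Rabs_R0. lra.
    + destruct (rrun_le_pos L (b n) (b i) (b_ge_inner i ltac:(lia)) Hokn) as [_ Hle].
      destruct (HfarF (rrun L (b i))) as [_ Hdev]; [left; fold y1 in Hle; lra|].
      apply Hclose; [exact Hdev|apply Hfitb; lia].
  - intros j Hj. rewrite rrun_app.
    destruct (rrun_le_neg L (a m) (a j) (conj (a_le_last j Hj) a_neg) Hoka) as [_ Hle].
    destruct (HfarF (rrun L (a j))) as [_ Hdev]; [right; fold w in Hle; lra|].
    apply Hclose; [exact Hdev|apply Hfita, Hj].
Qed.

End InterpolationStep.

Lemma interpolable_step (n m : nat) : interpolable n m -> interpolable (S n) m.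
Proof.
  intros IH b tb a ta eta Hb Hbd Htb Htbd Ha Had Hta Htad Heta.
  assert (Hgap : tb (S n) < tb n) by (apply Htbd; lia).
  set (e := Rmin (eta / 2) ((tb n - tb (S n)) / 2)).
  assert (He : 0 < e) by (apply Rmin_pos; lra).
  assert (He1 : e <= eta / 2) by apply Rmin_l.
  assert (He2 : e <= (tb n - tb (S n)) / 2) by apply Rmin_r.
  destruct (approach_inner_points n m b tb a ta Hb Hbd Ha Had e IH He)
    as (L & HokL & HokL' & Hfitb & Hfita); auto; [lra|].
  apply (place_outer_point n m b tb a ta Hb Hbd Ha Had L e eta); auto; lra.
Qed.

Lemma interpolable_all (n m : nat) : interpolable n m.
Proof.
  assert (H0 : forall k, interpolable k 0).
  { intro k. induction k as [|k IH]; [exact interpolable_base|exact (interpolable_step k 0 IH)]. }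
  revert m. induction n as [|n IH]; intro m.
  - apply interpolable_sym, H0.
  - apply interpolable_step, IH.
Qed.

(** * Uniform approximation *)

Lemma interpolate_points (n m : nat) (xs ys xn yn : nat -> R) (e : R) :
  0 < xs 0%nat -> (forall i, (i < n)%nat -> xs i < xs (S i)) ->
  0 < ys 0%nat -> (forall i, (i < n)%nat -> ys i < ys (S i)) ->
  xn 0%nat < 0 -> (forall j, (j < m)%nat -> xn (S j) < xn j) ->
  yn 0%nat < 0 -> (forall j, (j < m)%nat -> yn (S j) < yn j) -> 0 < e ->
  exists l, run_ok l (xs n) /\ run_ok l (xn m) /\
    (forall i, (i <= n)%nat -> Rabs (run l (xs i) - ys i) < e) /\
    (forall j, (j <= m)%nat -> Rabs (run l (xn j) - yn j) < e).
Proof.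
  intros Hxs Hxsi Hys Hysi Hxn Hxnj Hyn Hynj He.
  pose proof (increasing_range xs n Hxsi n (le_n n)).
  pose proof (increasing_range ys n Hysi) as Hysr.
  pose proof (decreasing_range xn m Hxnj m (le_n m)).
  pose proof (decreasing_range yn m Hynj) as Hynr.
  destruct (Hysr n (le_n n)), (Hynr m (le_n m)).
  (* [tau] bounds [|1/y|] from below over all targets [y] *)
  set (tau := Rmin (/ ys n) (- / yn m)).
  assert (Htau : 0 < tau).
  { apply Rmin_pos; [apply Rinv_0_lt_compat; lra|].
    rewrite <- Rinv_opp. apply Rinv_0_lt_compat. lra. }
  set (eta := Rmin (tau / 2) (e * tau ^ 2 / 2)).
  assert (Heta : 0 < eta)
    by (apply Rmin_pos; [lra|]; apply Rdiv_lt_0_compat;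
        [apply Rmult_lt_0_compat; [lra|apply pow_lt; lra]|lra]).
  destruct (interpolable_all n m (fun i => / xs i) (fun i => / ys i) (fun j => / xn j)
             (fun j => / yn j) eta) as (l & Hokb & Hoka & Hfitb & Hfita); cbv beta;
    [apply Rinv_0_lt_compat; lra|apply Rinv_decreasing; assumption|
     apply Rinv_0_lt_compat; lra|apply Rinv_decreasing; assumption|
     apply Rinv_lt_0_compat; lra|apply Rinv_increasing_neg; assumption|
     apply Rinv_lt_0_compat; lra|apply Rinv_increasing_neg; assumption|exact Heta|].
  unfold rok, rrun in *. rewrite Rinv_inv in Hokb, Hoka.
  exists l. split; [exact Hokb|split; [exact Hoka|split]].
  - intros i Hi. specialize (Hfitb i Hi). rewrite Rinv_inv in Hfitb.
    rewrite <- (Rinv_inv (run l (xs i))), <- (Rinv_inv (ys i)).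
    destruct (Hysr i Hi).
    apply (Rinv_close _ _ tau eta e Htau); [|exact Hfitb|apply Rmin_l|apply Rmin_r].
    rewrite Rabs_pos_eq by (left; apply Rinv_0_lt_compat; lra).
    eapply Rle_trans; [apply Rmin_l|]. apply Rinv_le_contravar; lra.
  - intros j Hj. specialize (Hfita j Hj). rewrite Rinv_inv in Hfita.
    rewrite <- (Rinv_inv (run l (xn j))), <- (Rinv_inv (yn j)).
    destruct (Hynr j Hj).
    apply (Rinv_close _ _ tau eta e Htau); [|exact Hfita|apply Rmin_l|apply Rmin_r].
    rewrite Rabs_left, <- Rinv_opp by (apply Rinv_lt_0_compat; lra).
    eapply Rle_trans; [apply Rmin_r|]. rewrite <- Rinv_opp. apply Rinv_le_contravar; lra.
Qed.

Lemma increasing_fit (M e : R) (h : R -> R) : 0 < M -> continuity h ->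
  (forall x y, x < y -> h x < h y) -> h 0 = 0 -> 0 < e ->
  exists l, run_ok l (- M) /\ run_ok l M /\
    forall x, - M <= x <= M -> Rabs (run l x - h x) < e.
Proof.
  intros HM Hh Hmono H0 He.
  assert (Hle : forall x y, x <= y -> h x <= h y)
    by (intros x y [Hxy|<-]; [left; apply Hmono, Hxy|right; reflexivity]).
  destruct (uniform_increment h M (e / 2) Hh ltac:(lra)) as (du & Hdu & Hinc).
  destruct (exists_nat_div_lt M du Hdu) as [n Hn].
  set (st := M / INR (S n)) in *.
  assert (HN : 0 < INR (S n)) by apply lt_0_INR, Nat.lt_0_succ.
  assert (Hst : 0 < st) by (apply Rdiv_lt_0_compat; assumption).
  assert (HM' : INR (S n) * st = M) by (unfold st; field; lra).
  assert (Hstep : forall x y, - M <= x <= y -> y <= M -> y - x <= st -> h y - h x < e / 2)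
    by (intros x y Hxy Hy Hd; apply Hinc; lra).
  set (xs := fun i => INR (S i) * st).
  assert (Hxs0 : 0 < xs 0%nat) by (unfold xs; simpl; lra).
  assert (Hxs : forall i, xs i < xs (S i)) by (intro i; unfold xs; rewrite (S_INR (S i)); lra).
  destruct (interpolate_points n n xs (fun i => h (xs i)) (fun j => - xs j) (fun j => h (- xs j))
              (e / 2)) as (l & Hokp & Hokn & Hfitp & Hfitn); cbv beta;
    [exact Hxs0|intros; apply Hxs|rewrite <- H0; apply Hmono, Hxs0|intros; apply Hmono, Hxs|
     lra|intros; apply Ropp_lt_contravar, Hxs|rewrite <- H0; apply Hmono; lra|
     intros; apply Hmono, Ropp_lt_contravar, Hxs|lra|].
  change (xs n) with (INR (S n) * st) in Hokp, Hokn. rewrite HM' in Hokp, Hokn.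
  exists l. split; [exact Hokn|split; [exact Hokp|]].
  assert (Hmon : forall x y, - M <= x <= y -> y <= M -> run l x <= run l y)
    by (intros x y Hx Hy; apply run_le; try apply (run_ok_between l (- M) _ M); auto; lra).
  replace e with (2 * (e / 2)) by field.
  assert (Hneg : forall x, 0 <= x <= M -> Rabs (run l (- x) - h (- x)) < 2 * (e / 2)).
  { intros x Hx. rewrite <- Rabs_Ropp.
    replace (- (run l (- x) - h (- x))) with ((- run l (- x)) - (- h (- x))) by ring.
    apply (grid_half_fit (fun y => - run l (- y)) (fun y => - h (- y)) M st (e / 2) n); auto.
    - rewrite Ropp_0, run_0, H0. ring.
    - intros y z Hy Hz. apply Ropp_le_contravar, Hmon; lra.
    - intros y z Hyz. apply Ropp_le_contravar, Hle. lra.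
    - intros y z Hy Hz Hd. enough (h (- y) - h (- z) < e / 2) by lra. apply Hstep; lra.
    - intros i Hi. rewrite <- Rabs_Ropp.
      replace (- (- run l (- (INR (S i) * st)) - - h (- (INR (S i) * st))))
        with (run l (- xs i) - h (- xs i)) by (unfold xs; ring).
      apply Hfitn, Hi. }
  intros x Hx. destruct (Rle_lt_dec 0 x).
  - apply (grid_half_fit (run l) h M st (e / 2) n); auto; [rewrite run_0, H0; reflexivity|
      intros y z Hy Hz; apply Hmon; lra|intros y z Hy Hz Hd; apply Hstep; lra|lra].
  - replace x with (- - x) by ring. apply Hneg. lra.
Qed.

Theorem lemma3p15 (K : R -> Prop) (h : R -> R) (eps : R) :
  compact K ->
  continuity h ->
  (forall x y, x < y -> h x < h y) ->
  h 0 = 0 ->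
  0 < eps ->
  exists phi : R -> R, in_AF K phi /\
    exists d, d < eps /\ forall x, K x -> Rabs (phi x - h x) <= d.
Proof.
  intros HK Hh Hmono H0 Heps.
  destruct (compact_symmetric_bound K HK) as (M & HM & HKM).
  destruct (increasing_fit M (eps / 2) h HM Hh Hmono H0 ltac:(lra)) as (l & Hlo & Hhi & Hfit).
  exists (run l). split; [exact (run_in_AF K l (- M) M Hlo Hhi HKM)|].
  exists (eps / 2). split; [lra|]. intros x Kx. left. apply Hfit, HKM, Kx.
Qed.
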